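(* Let $x=(x_1|x_2|x_3)$, $y=(y_1|y_2|y_3)$, $z=(z_1|z_2|z_3)$ be pairwise orthogonal (over $\mathbb{F}_2$) binary vectors of length 24, each split into three blocks of length 8, such that every block $x_i,y_i,z_i$ ($i=1,2,3$) has weight 4 (so each of $x,y,z$ has weight 12). Suppose that for each $i=1,2,3$ the images $\psi(x_i),\psi(y_i),\psi(z_i)$ are linearly independent in the quotient space $\mathbb{F}_2^8/\langle \mathbf{0},\mathbf{1}\rangle$, and that $$\mathrm{wt}(x_i+y_i)=\mathrm{wt}(x_i+z_i)=\mathrm{wt}(y_i+z_i)=4\quad (i=1,2,3).$$ Then: (a) $|\mathcal{L}(x)|=|\mathcal{L}(y)|=|\mathcal{L}(z)|=576^4$; (b) $|\mathcal{L}(x,y)|=16^4$, and moreover $\mathcal{L}(x,y)=\mathcal{L}(x,x+y)=\mathcal{L}(x+y,y)$; (c) $|\mathcal{L}(x,y,z)|=1$.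
   Context: A Latin square of order 8 on the symbols $\{0,1,\dots,7\}$ is an $8\times 8$ array $(a_{i,j})_{i,j=0}^{7}$ in which every symbol occurs exactly once in each row and each column; it is identified with the code $L=\{(i,j,a_{i,j}):0\le i,j\le 7\}\subseteq\{0,\dots,7\}^3$ of 64 words. Let $\mathcal{L}$ be the set of all such codes $L$ (all Latin squares of order 8). Let $\varphi(s)\in\mathbb{F}_2^8$ denote the unit vector with a 1 in position $s$ (positions indexed $0,\dots,7$), and for $L\in\mathcal{L}$ let $C(L)=\{(\varphi(i)\,|\,\varphi(j)\,|\,\varphi(a_{i,j})):(i,j,a_{i,j})\in L\}\subseteq\mathbb{F}_2^{24}$. For $x\in\mathbb{F}_2^{24}$, $\mathcal{L}(x)$ is the set of all $L\in\mathcal{L}$ such that every word of $C(L)$ is orthogonal to $x$ over $\mathbb{F}_2$; $\mathcal{L}(x,y)=\mathcal{L}(x)\cap\mathcal{L}(y)$ and $\mathcal{L}(x,y,z)=\mathcal{L}(x)\cap\mathcal{L}(y)\cap\mathcal{L}(z)$. $\mathbf{0},\mathbf{1}$ denote the all-zero and all-one vectors of length 8, and $\psi:\mathbb{F}_2^8\to\mathbb{F}_2^8/\langle\mathbf{0},\mathbf{1}\rangle$ is the quotient map. $\mathrm{wt}$ denotes Hamming weight. *)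

From HB Require Import structures.
From mathcomp Require Import all_boot all_order all_algebra.
Set Implicit Arguments. Unset Strict Implicit. Unset Printing Implicit Defensive.
Import GRing.Theory.
Local Open Scope ring_scope.

Notation bvec n := 'rV['F_2]_n.

(* The square is
   identified with its code L = {(i,j,a_{i,j})}; this identification is a
   bijection, so sets/cardinalities of squares agree with those of codes. *)
Definition square := {ffun 'I_8 * 'I_8 -> 'I_8}.

Definition latin (a : square) : bool :=
  [forall i : 'I_8, forall j1 : 'I_8, forall j2 : 'I_8,
     (a (i, j1) == a (i, j2)) ==> (j1 == j2)] &&
  [forall j : 'I_8, forall i1 : 'I_8, forall i2 : 'I_8,
     (a (i1, j) == a (i2, j)) ==> (i1 == i2)].

Definition phi (s : 'I_8) : bvec 8 := \row_(k < 8) (k == s)%:R.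

Definition concat3 (u v w : bvec 8) : bvec 24 :=
  \row_(k < 24) if (k < 8)%N then u 0 (inord k)
                else if (k < 16)%N then v 0 (inord (k - 8))
                else w 0 (inord (k - 16)).

Definition block (x : bvec 24) (k : 'I_3) : bvec 8 :=
  \row_(j < 8) x 0 (inord (8 * k + j)).

Definition dot n (u v : bvec n) : 'F_2 := (u *m v^T) 0 0.
Definition orth n (u v : bvec n) : bool := dot u v == 0.

Definition wt n (v : bvec n) : nat := #|[set k : 'I_n | v 0 k != 0]|.

Definition word (a : square) (ij : 'I_8 * 'I_8) : bvec 24 :=
  concat3 (phi ij.1) (phi ij.2) (phi (a ij)).

Definition LS (x : bvec 24) : {set square} :=
  [set a : square | latin a && [forall ij, orth (word a ij) x]].
Definition LS2 (x y : bvec 24) : {set square} := LS x :&: LS y.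
Definition LS3 (x y z : bvec 24) : {set square} := LS x :&: LS y :&: LS z.

Definition one8 : bvec 8 := \row_(k < 8) 1.

(* psi(u), psi(v), psi(w) linearly independent in F_2^8 / <0,1>:
   no nontrivial F_2-combination of u, v, w lies in the subspace {0, 1}. *)
Definition indep_mod1 (u v w : bvec 8) : bool :=
  [forall a : 'F_2, forall b : 'F_2, forall c : 'F_2,
     ((a != 0) || (b != 0) || (c != 0)) ==>
     (let s := a *: u + b *: v + c *: w in (s != 0) && (s != one8))].

From mathcomp Require Import all_boot all_order all_algebra.
From mathcomp Require Import zify.
Import GRing.Theory.
Set Implicit Arguments. Unset Strict Implicit. Unset Printing Implicit Defensive.

(* Orthogonality of the word (i | j | a_ij) to x = (x1 | x2 | x3) means
   x3(a_ij) = x1(i) + x2(j).  Label rows, columns and symbols by the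
   corresponding coordinates of x (of (x, y), of (x, y, z)), i.e. by elements
   of G = F_2^k.  A square then lies in L(x) (L(x,y), L(x,y,z)) iff it is Latin
   and maps the rows labelled u and the columns labelled v into the symbols
   labelled u + v.  The weight conditions (and, for three vectors, the fact that
   x_i + y_i + z_i is neither 0 nor 1) say that every label class has exactly
   8 / 2^k elements, so such a square amounts to a family of |G|^2 independent
   Latin squares of order 8 / 2^k: there are 576^4, 2^16 = 16^4 and 1^64 of
   them.  The identities L(x,y) = L(x,x+y) = L(x+y,y) are bilinearity. *)

(** * Latin squares and their enumeration *)

Section LatinSquares.
Variable T : finType.

(* [latin] is [latin_sq] at ['I_8], by conversion. *)
Definition latin_sq (b : {ffun T * T -> T}) : bool :=
  [forall i : T, forall j1 : T, forall j2 : T,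
     (b (i, j1) == b (i, j2)) ==> (j1 == j2)] &&
  [forall j : T, forall i1 : T, forall i2 : T,
     (b (i1, j) == b (i2, j)) ==> (i1 == i2)].

Lemma latin_sqP (b : {ffun T * T -> T}) :
  reflect ((forall i, injective (fun j => b (i, j))) /\
           (forall j, injective (fun i => b (i, j))))
          (latin_sq b).
Proof.
apply: (iffP andP) => [[/forallP Hr /forallP Hc] | [Hr Hc]]; split.
- move=> i j1 j2 E; apply/eqP.
  by move: (Hr i) => /forallP/(_ j1)/forallP/(_ j2); rewrite E eqxx.
- move=> j i1 i2 E; apply/eqP.
  by move: (Hc j) => /forallP/(_ i1)/forallP/(_ i2); rewrite E eqxx.
- apply/forallP => i; apply/forallP => j1; apply/forallP => j2.
  by apply/implyP => /eqP/Hr ->.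
- apply/forallP => j; apply/forallP => i1; apply/forallP => i2.
  by apply/implyP => /eqP/Hc ->.
Qed.

Definition latin_squares : {set {ffun T * T -> T}} := [set b | latin_sq b].

End LatinSquares.

(* Entries are naturals rather than ordinals so that the enumeration below
   evaluates under [vm_compute]: computing with [enum 'I_n] gets stuck on
   opaque proofs. *)
Section LatinSquareEnumeration.
Variable n' : nat.
Local Notation n := n'.+1.

Definition square_of_rows (s : seq (seq nat)) : {ffun 'I_n * 'I_n -> 'I_n} :=
  [ffun ij : 'I_n * 'I_n => inord (nth 0 (nth [::] s ij.1) ij.2)].

Definition rows_of_square (b : {ffun 'I_n * 'I_n -> 'I_n}) : seq (seq nat) :=
  [seq [seq val (b (i, j)) | j <- enum 'I_n] | i <- enum 'I_n].

Definition column_disjoint (r u : seq nat) : bool :=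
  all (fun j => nth 0 r j != nth 0 u j) (iota 0 n).

Fixpoint latin_rows k : seq (seq (seq nat)) :=
  if k is k'.+1 then
    [seq s <- [seq r :: t | t <- latin_rows k', r <- permutations (iota 0 n)]
       | pairwise column_disjoint s]
  else [:: [::]].

Lemma mem_latin_rows k s :
  (s \in latin_rows k) =
  [&& size s == k, all (mem (permutations (iota 0 n))) s
    & pairwise column_disjoint s].
Proof.
elim: k s => [|k IH] [|r t] //=; rewrite mem_filter.
  by apply/negbTE/negP => /andP [_ /allpairsP [[? ?] [_ _ //]]].
have -> : (r :: t \in [seq r :: t | t <- latin_rows k, r <- permutations (iota 0 n)])
          = (t \in latin_rows k) && (r \in permutations (iota 0 n)).
  apply/allpairsP/andP => [[[t' r'] [Ht Hr [-> ->]]] | [Ht Hr]] //.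
  by exists (t, r).
rewrite IH eqSS pairwise_cons.
by case: (size t == k); case: (r \in _); case: (all (column_disjoint r) t);
  case: (pairwise _ t); case: (all _ t).
Qed.

Lemma map_nth_enum_ord (U : Type) (x0 : U) (r : seq U) :
  size r = n -> [seq nth x0 r (nat_of_ord j) | j <- enum 'I_n] = r.
Proof.
by move=> Hr; rewrite -[RHS](mkseq_nth x0) Hr /mkseq -val_enum_ord -map_comp.
Qed.

Lemma rows_of_squareK : cancel rows_of_square square_of_rows.
Proof.
move=> b; apply/ffunP => -[i j]; rewrite ffunE /=.
by rewrite (nth_map ord0) ?size_enum_ord // (nth_map ord0) ?size_enum_ord //
  !nth_ord_enum inord_val.
Qed.

Lemma rows_of_square_latin b : latin_sq b -> rows_of_square b \in latin_rows n.
Proof.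
move=> /latin_sqP [Hr Hc].
rewrite mem_latin_rows size_map size_enum_ord eqxx andTb; apply/andP; split.
  apply/allP => _ /mapP [i _ ->]; rewrite inE mem_permutations -val_enum_ord.
  rewrite (map_comp val (fun j => b (i, j))); apply: perm_map.
  apply: uniq_perm; [by rewrite (map_inj_uniq (Hr i)) enum_uniq | exact: enum_uniq|].
  move=> k; rewrite [RHS](mem_enum 'I_n); apply/mapP.
  have [g _ gK] := injF_bij (Hr i).
  by exists (g k); rewrite ?mem_enum ?gK.
rewrite pairwise_map; have := enum_uniq 'I_n; rewrite uniq_pairwise.
apply: sub_pairwise => i1 i2 Hi; apply/allP => j; rewrite mem_iota add0n => Hj.
rewrite !(nth_map ord0) -?enumT ?size_enum_ord //.
by apply: contra Hi => /eqP /val_inj /Hc ->.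
Qed.

Lemma square_of_rows_latin s : s \in latin_rows n ->
  latin_sq (square_of_rows s) /\ rows_of_square (square_of_rows s) = s.
Proof.
rewrite mem_latin_rows => /and3P [/eqP Hs /allP Hperm /(pairwiseP [::]) Hdisj].
have Hrow i : i < n -> [/\ size (nth [::] s i) = n, uniq (nth [::] s i)
  & forall j, j < n -> nth 0 (nth [::] s i) j < n].
  move=> Hi; have /Hperm : nth [::] s i \in s by rewrite mem_nth ?Hs.
  rewrite inE mem_permutations => Hp; have Hsz := perm_size Hp.
  rewrite size_iota in Hsz; split; rewrite ?(perm_uniq Hp) ?iota_uniq // => j Hj.
  have : nth 0 (nth [::] s i) j \in iota 0 n by rewrite -(perm_mem Hp) mem_nth ?Hsz.
  by rewrite mem_iota.
split.
  apply/latin_sqP; split=> [i j1 j2 | j i1 i2]; rewrite !ffunE /=.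
    have [Hsz Hu Hlt] := Hrow i (ltn_ord i).
    move/(congr1 val); rewrite /= !inordK ?Hlt // => /eqP.
    by rewrite nth_uniq ?Hsz // => /eqP /val_inj.
  move=> E; apply: val_inj; apply/eqP; apply: contraT => Hne.
  wlog Hlt : i1 i2 E {Hne} / i1 < i2.
    by move=> W; case: ltngtP Hne => // H _; [apply: W E H | apply: W (esym E) H].
  have := Hdisj i1 i2; rewrite !inE Hs => /(_ (ltn_ord i1) (ltn_ord i2) Hlt).
  move/allP/(_ j); rewrite mem_iota add0n ltn_ord => /(_ isT).
  have [_ _ Hlt1] := Hrow i1 (ltn_ord i1); have [_ _ Hlt2] := Hrow i2 (ltn_ord i2).
  by move: E => /(congr1 val); rewrite /= !inordK ?Hlt1 ?Hlt2 // => ->; rewrite eqxx.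
rewrite /rows_of_square -[RHS](map_nth_enum_ord [::] Hs).
apply: eq_map => i; have [Hsz _ Hlt] := Hrow i (ltn_ord i).
rewrite -[RHS](map_nth_enum_ord 0 Hsz); apply: eq_map => j.
by rewrite ffunE /= inordK ?Hlt.
Qed.

Lemma card_latin_squares : uniq (latin_rows n) ->
  #|latin_squares 'I_n| = size (latin_rows n).
Proof.
move=> U.
have inj : {in latin_rows n &, injective square_of_rows}.
  move=> s1 s2 /square_of_rows_latin [_ E1] /square_of_rows_latin [_ E2] E.
  by rewrite -E1 -E2 E.
have Umap : uniq (map square_of_rows (latin_rows n)) by rewrite map_inj_in_uniq.
rewrite -(size_map square_of_rows) -(card_uniqP Umap).
apply: eq_card => b; rewrite inE; apply/idP/mapP => [Hb | [s Hs ->]].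
  by exists (rows_of_square b); rewrite ?rows_of_squareK ?rows_of_square_latin.
by case: (square_of_rows_latin Hs).
Qed.

End LatinSquareEnumeration.

Lemma card_latin_squares1 : #|latin_squares 'I_1| = 1.
Proof.
have /andP [/eqP Hsize U] : (size (latin_rows 0 1) == 1) && uniq (latin_rows 0 1).
  by vm_compute.
by rewrite (card_latin_squares U) Hsize.
Qed.

Lemma card_latin_squares2 : #|latin_squares 'I_2| = 2.
Proof.
have /andP [/eqP Hsize U] : (size (latin_rows 1 2) == 2) && uniq (latin_rows 1 2).
  by vm_compute.
by rewrite (card_latin_squares U) Hsize.
Qed.

Lemma card_latin_squares4 : #|latin_squares 'I_4| = 576.
Proof.
have /andP [/eqP Hsize U] : (size (latin_rows 3 4) == 576) && uniq (latin_rows 3 4).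
  by vm_compute.
by rewrite (card_latin_squares U) Hsize.
Qed.

(** * Latin squares graded by a quasigroup *)

Section GradedLatinSquares.
Variables (T G : finType) (op : G -> G -> G) (m : nat).
Hypotheses (opI : forall u, injective (op u)) (Iop : forall v, injective (op^~ v)).
Variables (cr cc cs : T -> G) (hr hc hs : T -> G * 'I_m) (gr gc gs : G * 'I_m -> T).
Hypotheses (hrK : cancel hr gr) (grK : cancel gr hr) (hr1 : forall t, (hr t).1 = cr t).
Hypotheses (hcK : cancel hc gc) (gcK : cancel gc hc) (hc1 : forall t, (hc t).1 = cc t).
Hypotheses (hsK : cancel hs gs) (gsK : cancel gs hs) (hs1 : forall t, (hs t).1 = cs t).

Definition graded_latin_squares : {set {ffun T * T -> T}} :=
  [set a | latin_sq a && [forall ij, cs (a ij) == op (cr ij.1) (cc ij.2)]].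

Definition assemble (F : {ffun G * G -> {ffun 'I_m * 'I_m -> 'I_m}}) :
    {ffun T * T -> T} :=
  [ffun ij : T * T => gs (op (cr ij.1) (cc ij.2),
                          F (cr ij.1, cc ij.2) ((hr ij.1).2, (hc ij.2).2))].

Lemma cr_gr p : cr (gr p) = p.1. Proof. by rewrite -hr1 grK. Qed.
Lemma cc_gc p : cc (gc p) = p.1. Proof. by rewrite -hc1 gcK. Qed.

Lemma assemble_inj : injective assemble.
Proof.
move=> F F' E; apply/ffunP => -[u v]; apply/ffunP => -[k l].
have := congr1 (fun a : {ffun T * T -> T} => hs (a (gr (u, k), gc (v, l)))) E.
by rewrite !ffunE /= !gsK !cr_gr !cc_gc !grK !gcK => -[].
Qed.

Lemma assemble_graded (F : {ffun G * G -> {ffun 'I_m * 'I_m -> 'I_m}}) :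
  (forall uv, latin_sq (F uv)) -> assemble F \in graded_latin_squares.
Proof.
move=> HF; rewrite inE; apply/andP; split; last first.
  by apply/forallP => ij; rewrite ffunE -hs1 gsK.
apply/latin_sqP; split=> [i j1 j2 | j i1 i2]; rewrite !ffunE /=.
  move=> /(can_inj gsK) [/opI Ec]; rewrite -Ec.
  have [/(_ (hr i).2) Hrow _] := latin_sqP _ (HF (cr i, cc j1)).
  move=> /Hrow El; apply: (can_inj hcK).
  by rewrite [hc j1]surjective_pairing [hc j2]surjective_pairing El !hc1 Ec.
move=> /(can_inj gsK) [/Iop Ec]; rewrite -Ec.
have [_ /(_ (hc j).2) Hcol] := latin_sqP _ (HF (cr i1, cc j)).
move=> /Hcol Ek; apply: (can_inj hrK).
by rewrite [hr i1]surjective_pairing [hr i2]surjective_pairing Ek !hr1 Ec.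
Qed.

Lemma graded_assemble (a : {ffun T * T -> T}) : a \in graded_latin_squares ->
  exists2 F, F \in ffun_on (latin_squares 'I_m) & a = assemble F.
Proof.
rewrite inE => /andP [/latin_sqP [Hr Hc] /forallP Hg].
have hsa p q : hs (a (gr p, gc q)) = (op p.1 q.1, (hs (a (gr p, gc q))).2).
  by rewrite [LHS]surjective_pairing hs1 (eqP (Hg (_, _))) /= cr_gr cc_gc.
pose F := [ffun uv : G * G => [ffun kl : 'I_m * 'I_m =>
             (hs (a (gr (uv.1, kl.1), gc (uv.2, kl.2)))).2]].
exists F.
  apply/ffun_onP => -[u v]; rewrite inE; apply/latin_sqP; split=> [k l1 l2 | l k1 k2].
    rewrite !ffunE /= => El.
    have /(can_inj hsK) /Hr /(can_inj gcK) [] // : hs (a (gr (u, k), gc (v, l1))) =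
         hs (a (gr (u, k), gc (v, l2))) by rewrite hsa [RHS]hsa El.
  rewrite !ffunE /= => Ek.
  have /(can_inj hsK) /Hc /(can_inj grK) [] // : hs (a (gr (u, k1), gc (v, l))) =
       hs (a (gr (u, k2), gc (v, l))) by rewrite hsa [RHS]hsa Ek.
apply/ffunP => -[i j]; rewrite !ffunE /=.
have -> : gr (cr i, (hr i).2) = i by rewrite -hr1 -surjective_pairing hrK.
have -> : gc (cc j, (hc j).2) = j by rewrite -hc1 -surjective_pairing hcK.
by rewrite -[op _ _](eqP (Hg (i, j))) -hs1 -surjective_pairing hsK.
Qed.

Lemma card_graded_latin_squares_of_labelling :
  #|graded_latin_squares| = (#|latin_squares 'I_m| ^ (#|G| * #|G|))%N.
Proof.
have -> : graded_latin_squares = assemble @: ffun_on (latin_squares 'I_m).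
  apply/setP => a; apply/idP/imsetP => [/graded_assemble [F] | [F /ffun_onP HF ->]].
    by exists F.
  by apply: assemble_graded => uv; have := HF uv; rewrite inE.
by rewrite (card_imset _ assemble_inj) card_ffun_on card_prod.
Qed.

End GradedLatinSquares.

(** * Fibres of labellings *)

Lemma card_preim_fibres (T G : finType) (f : T -> G) (P : pred G) :
  #|[set t | P (f t)]| = \sum_(g | P g) #|[set t | f t == g]|.
Proof.
rewrite -sum1_card (partition_big f P) /= => [|t]; last by rewrite inE.
apply: eq_bigr => g Pg; rewrite -sum1_card; apply: eq_bigl => t.
by rewrite !inE; case: eqP => [->|]; rewrite ?Pg ?andbF.
Qed.

Lemma card_fibres_sum (T G : finType) (f : T -> G) :
  #|T| = \sum_g #|[set t | f t == g]|.
Proof.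
by rewrite -(card_preim_fibres f predT); apply: eq_card => t; rewrite inE.
Qed.

Lemma fibre_labelling (T G : finType) (f : T -> G) (m : nat) :
  (forall g, #|[set t | f t == g]| = m) ->
  exists h : T -> G * 'I_m, exists h' : G * 'I_m -> T,
    [/\ cancel h h', cancel h' h & forall t, (h t).1 = f t].
Proof.
move=> Hf.
have Hlt t : index t (enum [set s | f s == f t]) < m.
  by rewrite -(Hf (f t)) cardE index_mem mem_enum inE.
pose h t := (f t, Ordinal (Hlt t)).
have h_inj : injective h.
  move=> t t' [E1]; rewrite -E1 => E2.
  have Ht' : t' \in enum [set s | f s == f t] by rewrite mem_enum inE E1.
  by rewrite -(nth_index t Ht') -E2 nth_index // mem_enum inE.
have cardT : #|T| = (#|G| * m)%N.
  by rewrite (card_fibres_sum f) (eq_bigr (fun=> m)) // sum_nat_const.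
have [h' hK h'K] : bijective h.
  by apply: (inj_card_bij h_inj); rewrite card_prod card_ord cardT.
by exists h, h'.
Qed.

Theorem card_graded_latin_squares (T G : finType) (op : G -> G -> G) (m : nat)
    (cr cc cs : T -> G) :
  (forall u, injective (op u)) -> (forall v, injective (op^~ v)) ->
  (forall g, #|[set t | cr t == g]| = m) ->
  (forall g, #|[set t | cc t == g]| = m) ->
  (forall g, #|[set t | cs t == g]| = m) ->
  #|graded_latin_squares op cr cc cs| = (#|latin_squares 'I_m| ^ (#|G| * #|G|))%N.
Proof.
move=> opI Iop /fibre_labelling [hr [gr [hrK grK hr1]]]
  /fibre_labelling [hc [gc [hcK gcK hc1]]] /fibre_labelling [hs [gs [hsK gsK hs1]]].
exact: card_graded_latin_squares_of_labelling hrK grK hr1 hcK gcK hc1 hsK gsK hs1.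
Qed.

Local Open Scope ring_scope.

Lemma F2_cases (u : 'F_2) : u = 0 \/ u = 1.
Proof. by case: u => [[|[|k]] Hk] //; [left | right]; apply: val_inj. Qed.

Lemma F2_add11 : 1 + 1 = 0 :> 'F_2.
Proof. exact: val_inj. Qed.

Lemma sum_F2 (F : 'F_2 -> nat) : (\sum_(g : 'F_2) F g = F 0%R + F 1%R)%N.
Proof. by rewrite big_ord_recl big_ord1; congr (F _ + F _)%N; apply: val_inj. Qed.

Lemma sum_F2x2 (F : 'F_2 * 'F_2 -> nat) :
  (\sum_g F g = F (0, 0)%R + F (0, 1)%R + F (1, 0)%R + F (1, 1)%R)%N.
Proof.
rewrite (eq_bigr (fun g => F (g.1, g.2))) => [|[] //].
by rewrite -(pair_bigA _ (fun u v => F (u, v))) /= sum_F2 !sum_F2 addnA.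
Qed.

Lemma sum_F2x2x2 (F : 'F_2 * 'F_2 * 'F_2 -> nat) :
  (\sum_g F g = F (0, 0, 0)%R + F (0, 0, 1)%R + F (0, 1, 0)%R + F (0, 1, 1)%R
               + F (1, 0, 0)%R + F (1, 0, 1)%R + F (1, 1, 0)%R + F (1, 1, 1)%R)%N.
Proof.
rewrite (eq_bigr (fun g => F (g.1, g.2))) => [|[] //].
by rewrite -(pair_bigA _ (fun u v => F (u, v))) /= sum_F2x2 !sum_F2 !addnA.
Qed.

Lemma F2_fibres_of_weights (n : 'F_2 -> nat) (m : nat) :
  (n 0%R + n 1%R = 2 * m)%N -> n 1%R = m -> forall g, n g = m.
Proof. by move=> Htot H1 g; case: (F2_cases g) => ->; lia. Qed.

Lemma F2x2_fibres_of_weights (n : 'F_2 -> 'F_2 -> nat) (m : nat) :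
  (n 0%R 0%R + n 0%R 1%R + n 1%R 0%R + n 1%R 1%R = 4 * m)%N ->
  (n 1%R 0%R + n 1%R 1%R = 2 * m)%N -> (n 0%R 1%R + n 1%R 1%R = 2 * m)%N ->
  (n 0%R 1%R + n 1%R 0%R = 2 * m)%N -> forall u v, n u v = m.
Proof.
move=> Htot H1 H2 H12 u v.
by case: (F2_cases u) => ->; case: (F2_cases v) => ->; lia.
Qed.

Lemma card_F2_fibres (T : finType) (f : T -> 'F_2) (m : nat) :
  #|T| = (2 * m)%N -> #|[set t | f t != 0]| = m ->
  forall g, #|[set t | f t == g]| = m.
Proof.
move=> HT Hw; apply: F2_fibres_of_weights.
  by rewrite -HT (card_fibres_sum f) sum_F2.
by rewrite -Hw (card_preim_fibres f (fun g => g != 0)) big_mkcond sum_F2.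
Qed.

Lemma card_F2x2_fibres (T : finType) (f1 f2 : T -> 'F_2) (m : nat) :
  #|T| = (4 * m)%N -> #|[set t | f1 t != 0]| = (2 * m)%N ->
  #|[set t | f2 t != 0]| = (2 * m)%N -> #|[set t | f1 t + f2 t != 0]| = (2 * m)%N ->
  forall g, #|[set t | (f1 t, f2 t) == g]| = m.
Proof.
pose f t := (f1 t, f2 t); move=> HT H1 H2 H12 [u v].
apply: (F2x2_fibres_of_weights (n := fun u v => #|[set t | f t == (u, v)]|)).
- by rewrite -HT (card_fibres_sum f) sum_F2x2.
- by rewrite -H1 (card_preim_fibres f (fun g => g.1 != 0)) big_mkcond sum_F2x2.
- by rewrite -H2 (card_preim_fibres f (fun g => g.2 != 0)) big_mkcond sum_F2x2 /= !addn0.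
rewrite -H12 (card_preim_fibres f (fun g => g.1 + g.2 != 0)) big_mkcond sum_F2x2.
by rewrite !add0r addr0 F2_add11 /= addn0.
Qed.

Lemma F2x2x2_fibres_of_weights (n : 'F_2 -> 'F_2 -> 'F_2 -> nat) :
  (n 0%R 0%R 0%R + n 0%R 0%R 1%R + n 0%R 1%R 0%R + n 0%R 1%R 1%R
   + n 1%R 0%R 0%R + n 1%R 0%R 1%R + n 1%R 1%R 0%R + n 1%R 1%R 1%R = 8)%N ->
  (n 1%R 0%R 0%R + n 1%R 0%R 1%R + n 1%R 1%R 0%R + n 1%R 1%R 1%R = 4)%N ->
  (n 0%R 1%R 0%R + n 0%R 1%R 1%R + n 1%R 1%R 0%R + n 1%R 1%R 1%R = 4)%N ->
  (n 0%R 0%R 1%R + n 0%R 1%R 1%R + n 1%R 0%R 1%R + n 1%R 1%R 1%R = 4)%N ->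
  (n 0%R 1%R 0%R + n 0%R 1%R 1%R + n 1%R 0%R 0%R + n 1%R 0%R 1%R = 4)%N ->
  (n 0%R 0%R 1%R + n 0%R 1%R 1%R + n 1%R 0%R 0%R + n 1%R 1%R 0%R = 4)%N ->
  (n 0%R 0%R 1%R + n 0%R 1%R 0%R + n 1%R 0%R 1%R + n 1%R 1%R 0%R = 4)%N ->
  (0 < n 0%R 0%R 1%R + n 0%R 1%R 0%R + n 1%R 0%R 0%R + n 1%R 1%R 1%R < 8)%N ->
  forall u v w, n u v w = 1%N.
Proof.
move=> Htot Hx Hy Hz Hxy Hxz Hyz Hxyz u v w.
by case: (F2_cases u) => ->; case: (F2_cases v) => ->; case: (F2_cases w) => ->;
  lia.
Qed.

Lemma card_F2x2x2_fibres (T : finType) (f1 f2 f3 : T -> 'F_2) :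
  #|T| = 8%N -> #|[set t | f1 t != 0]| = 4%N ->
  #|[set t | f2 t != 0]| = 4%N -> #|[set t | f3 t != 0]| = 4%N ->
  #|[set t | f1 t + f2 t != 0]| = 4%N -> #|[set t | f1 t + f3 t != 0]| = 4%N ->
  #|[set t | f2 t + f3 t != 0]| = 4%N ->
  (0 < #|[set t | (f1 t + f2 t + f3 t != 0)%R]| < 8)%N ->
  forall g, #|[set t | (f1 t, f2 t, f3 t) == g]| = 1%N.
Proof.
pose f t := (f1 t, f2 t, f3 t).
move=> HT H1 H2 H3 H12 H13 H23 H123 [[u v] w].
have weight P := card_preim_fibres f P.
apply: (F2x2x2_fibres_of_weights (n := fun u v w => #|[set t | f t == (u, v, w)]|)).
- by rewrite -HT (card_fibres_sum f) sum_F2x2x2.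
- by rewrite -H1 (weight (fun g => g.1.1 != 0)) big_mkcond sum_F2x2x2 /=
    ?eqxx ?oner_eq0 /= ?add0n ?addn0.
- by rewrite -H2 (weight (fun g => g.1.2 != 0)) big_mkcond sum_F2x2x2 /=
    ?eqxx ?oner_eq0 /= ?add0n ?addn0.
- by rewrite -H3 (weight (fun g => g.2 != 0)) big_mkcond sum_F2x2x2 /=
    ?eqxx ?oner_eq0 /= ?add0n ?addn0.
- by rewrite -H12 (weight (fun g => g.1.1 + g.1.2 != 0)) big_mkcond sum_F2x2x2 /=
    ?add0r ?addr0 ?F2_add11 ?eqxx ?oner_eq0 /= ?add0n ?addn0.
- by rewrite -H13 (weight (fun g => g.1.1 + g.2 != 0)) big_mkcond sum_F2x2x2 /=
    ?add0r ?addr0 ?F2_add11 ?eqxx ?oner_eq0 /= ?add0n ?addn0.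
- by rewrite -H23 (weight (fun g => g.1.2 + g.2 != 0)) big_mkcond sum_F2x2x2 /=
    ?add0r ?addr0 ?F2_add11 ?eqxx ?oner_eq0 /= ?add0n ?addn0.
move: H123.
by rewrite (weight (fun g => g.1.1 + g.1.2 + g.2 != 0)) big_mkcond sum_F2x2x2 /=
    ?add0r ?addr0 ?F2_add11 ?eqxx ?oner_eq0 /= ?add0n ?addn0.
Qed.

(** * The sets L(x) *)

Lemma dot_phi (s : 'I_8) (u : bvec 8) : dot (phi s) u = u 0 s.
Proof.
rewrite /dot mxE (bigD1 s) //= big1 => [|k Hk]; rewrite !mxE ?eqxx ?mul1r ?addr0 //.
by rewrite (negbTE Hk) mul0r.
Qed.

Lemma dot_concat3 (u v w : bvec 8) (x : bvec 24) :
  dot (concat3 u v w) x = dot u (block x 0) + dot v (block x 1) + dot w (block x 2).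
Proof.
rewrite /dot !mxE (@big_split_ord _ _ _ 8 16) (@big_split_ord _ _ _ 8 8) /= addrA.
congr (_ + _ + _); apply: eq_bigr => i _; have Hi := ltn_ord i; rewrite !mxE /=.
- rewrite ltn_ord; congr (u 0 _ * x 0 _); apply: val_inj; rewrite /= inordK //; lia.
- rewrite ifT; last lia.
  by congr (v 0 _ * x 0 _); apply: val_inj; rewrite /= inordK; lia.
by congr (w 0 _ * x 0 _); apply: val_inj; rewrite /= inordK; lia.
Qed.

Definition bit (x : bvec 24) (k : 'I_3) (t : 'I_8) : 'F_2 := block x k 0 t.

Lemma orth_word (a : square) (ij : 'I_8 * 'I_8) (x : bvec 24) :
  orth (word a ij) x = (bit x 2 (a ij) == bit x 0 ij.1 + bit x 1 ij.2).
Proof.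
rewrite /orth /word dot_concat3 !dot_phi addrC addr_eq0.
by rewrite (oppr_pchar2 (pchar_Fp (isT : prime 2))).
Qed.

Lemma forallb_and (I : finType) (P Q : pred I) :
  [forall i, P i && Q i] = [forall i, P i] && [forall i, Q i].
Proof.
apply/forallP/andP => [H | [/forallP HP /forallP HQ] i]; last by rewrite HP HQ.
by split; apply/forallP => i; case/andP: (H i).
Qed.

Lemma LS_graded x :
  LS x = graded_latin_squares +%R (bit x 0) (bit x 1) (bit x 2).
Proof.
apply/setP => a; rewrite !inE; congr (_ && _).
by apply: eq_forallb => ij; rewrite orth_word.
Qed.

Lemma LS2_graded x y :
  LS2 x y = graded_latin_squares (G := ('F_2 * 'F_2)%type) +%R
      (fun t => (bit x 0 t, bit y 0 t)) (fun t => (bit x 1 t, bit y 1 t))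
      (fun t => (bit x 2 t, bit y 2 t)).
Proof.
apply/setP => a; rewrite in_setI !LS_graded !inE.
case: (latin_sq a) => //=; rewrite -forallb_and.
by apply: eq_forallb => ij; rewrite xpair_eqE.
Qed.

Lemma LS3_graded x y z :
  LS3 x y z = graded_latin_squares (G := ('F_2 * 'F_2 * 'F_2)%type) +%R
      (fun t => (bit x 0 t, bit y 0 t, bit z 0 t))
      (fun t => (bit x 1 t, bit y 1 t, bit z 1 t))
      (fun t => (bit x 2 t, bit y 2 t, bit z 2 t)).
Proof.
apply/setP => a; rewrite !in_setI !LS_graded !inE.
case: (latin_sq a) => //=; rewrite -!forallb_and.
by apply: eq_forallb => ij; rewrite !xpair_eqE.
Qed.

Lemma wt_gt0 n (v : bvec n) : v != 0 -> (0 < wt v)%N.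
Proof.
apply: contraR; rewrite -leqNgt leqn0 => /eqP /cards0_eq H0.
apply/eqP/rowP => t; rewrite mxE.
by have := in_set0 t; rewrite -H0 inE => /negbFE /eqP.
Qed.

Lemma wt_lt8 (v : bvec 8) : v != one8 -> (wt v < 8)%N.
Proof.
apply: contraR; rewrite -leqNgt => H8.
have := cardsC [set t | v 0 t != 0]; rewrite -/(wt v) card_ord => HC.
have /cards0_eq C0 : #|~: [set t | v 0 t != 0]| = 0%N by lia.
apply/eqP/rowP => t; rewrite !mxE.
have := in_set0 t; rewrite -C0 !inE negbK.
by case: (F2_cases (v 0 t)) => ->; rewrite ?eqxx.
Qed.

Lemma wt_addE n (u v : bvec n) : wt (u + v) = #|[set t | u 0 t + v 0 t != 0]|.
Proof. by apply: eq_card => t; rewrite !inE mxE. Qed.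

Lemma card_LS x : (forall k, wt (block x k) = 4%N) -> #|LS x| = (576 ^ 4)%N.
Proof.
move=> Hx; have fib k := card_F2_fibres (f := bit x k) (m := 4) (card_ord 8) (Hx k).
rewrite LS_graded (card_graded_latin_squares addrI addIr (fib 0) (fib 1) (fib 2)).
by rewrite card_latin_squares4 card_Fp.
Qed.

Lemma card_LS2 x y :
  (forall k, wt (block x k) = 4%N) -> (forall k, wt (block y k) = 4%N) ->
  (forall k, wt (block x k + block y k) = 4%N) -> #|LS2 x y| = (16 ^ 4)%N.
Proof.
move=> Hx Hy Hxy.
have fib k := card_F2x2_fibres (f1 := bit x k) (f2 := bit y k) (m := 2) (card_ord 8)
  (Hx k) (Hy k) (etrans (esym (wt_addE _ _)) (Hxy k)).
rewrite LS2_graded.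
rewrite (card_graded_latin_squares (G := ('F_2 * 'F_2)%type) addrI addIr
  (fib 0) (fib 1) (fib 2)).
by rewrite card_latin_squares2 card_prod card_Fp // -expnM.
Qed.

Lemma indep_mod1_card (u v w : bvec 8) : indep_mod1 u v w ->
  (0 < #|[set t | (u 0 t + v 0 t + w 0 t != 0)%R]| < 8)%N.
Proof.
move=> /forallP/(_ 1)/forallP/(_ 1)/forallP/(_ 1).
rewrite oner_eq0 /= !scale1r => /andP [H0 H1].
have -> : #|[set t | u 0 t + v 0 t + w 0 t != 0]| = wt (u + v + w).
  by apply: eq_card => t; rewrite !inE !mxE.
by rewrite wt_gt0 // wt_lt8.
Qed.

Lemma card_LS3 x y z :
  (forall k, [/\ wt (block x k) = 4%N, wt (block y k) = 4%N & wt (block z k) = 4%N]) ->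
  (forall k, indep_mod1 (block x k) (block y k) (block z k)) ->
  (forall k, [/\ wt (block x k + block y k) = 4%N, wt (block x k + block z k) = 4%N
               & wt (block y k + block z k) = 4%N]) ->
  #|LS3 x y z| = 1%N.
Proof.
move=> Hw Hind Hw2.
have fib k : forall g, #|[set t | (bit x k t, bit y k t, bit z k t) == g]| = 1%N.
  have [Hx Hy Hz] := Hw k; have [Hxy Hxz Hyz] := Hw2 k.
  rewrite !wt_addE in Hxy Hxz Hyz.
  exact: card_F2x2x2_fibres (card_ord 8) Hx Hy Hz Hxy Hxz Hyz (indep_mod1_card (Hind k)).
rewrite LS3_graded.
rewrite (card_graded_latin_squares (G := ('F_2 * 'F_2 * 'F_2)%type) addrI addIr
  (fib 0) (fib 1) (fib 2)).
by rewrite card_latin_squares1 exp1n.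
Qed.

Lemma dotDr n (u x y : bvec n) : dot u (x + y) = dot u x + dot u y.
Proof. by rewrite /dot linearD mulmxDr mxE. Qed.

Lemma orth_addr n (u x y : bvec n) : orth u y -> orth u (x + y) = orth u x.
Proof. by rewrite /orth dotDr => /eqP ->; rewrite addr0. Qed.

Lemma mem_LS x a : (a \in LS x) = latin a && [forall ij, orth (word a ij) x].
Proof. exact: in_set. Qed.

(* Stated for an abstract [S]: rewriting with [LS] itself makes Coq compare
   [LS y] with [LS z] by unfolding the finite sets, which does not terminate in
   reasonable time. *)
Lemma setI_orth_equiv (U I : finType) n (P : pred U) (w : U -> I -> bvec n)
    (S : bvec n -> {set U}) :
  (forall v a, (a \in S v) = P a && [forall i, orth (w a i) v]) ->
  forall x y z, (forall u, orth u x -> orth u z = orth u y) ->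
  S x :&: S y = S x :&: S z.
Proof.
move=> memS x y z Hz; apply/setP => a; rewrite !in_setI !memS.
apply: andb_id2l => /andP [_ /forallP Hx]; apply: andb_id2l => _.
by apply: eq_forallb => i; rewrite Hz.
Qed.

Lemma LS2_addl x y : LS2 x y = LS2 x (x + y).
Proof.
by apply: (setI_orth_equiv mem_LS) => u Hu; rewrite addrC orth_addr.
Qed.

Lemma LS2_addr x y : LS2 x y = LS2 (x + y) y.
Proof.
rewrite /LS2 [LHS]setIC [RHS]setIC.
by apply: (setI_orth_equiv mem_LS) => u Hu; rewrite orth_addr.
Qed.

Unset Implicit Arguments.
Theorem lemma2 (x y z : 'rV['F_2]_24) :
  orth x y -> orth x z -> orth y z ->
  (forall i : 'I_3, [/\ wt (block x i) = 4%N, wt (block y i) = 4%N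
                      & wt (block z i) = 4%N]) ->
  (forall i : 'I_3, indep_mod1 (block x i) (block y i) (block z i)) ->
  (forall i : 'I_3, [/\ wt (block x i + block y i) = 4%N,
                        wt (block x i + block z i) = 4%N
                      & wt (block y i + block z i) = 4%N]) ->
  [/\ #|LS x| = (576 ^ 4)%N, #|LS y| = (576 ^ 4)%N & #|LS z| = (576 ^ 4)%N] /\
  (#|LS2 x y| = (16 ^ 4)%N /\ LS2 x y = LS2 x (x + y) /\ LS2 x y = LS2 (x + y) y) /\
  #|LS3 x y z| = 1%N.
Proof.
move=> _ _ _ Hw Hind Hw2.
have Hx k : wt (block x k) = 4%N by case: (Hw k).
have Hy k : wt (block y k) = 4%N by case: (Hw k).
have Hz k : wt (block z k) = 4%N by case: (Hw k).
have Hxy k : wt (block x k + block y k) = 4%N by case: (Hw2 k).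
split; first by split; apply: card_LS.
split; last exact: card_LS3.
by split; [exact: card_LS2 | split; [exact: LS2_addl | exact: LS2_addr]].
Qed.
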